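(* Let $B,D\in\mathrm{Mat}_{m\times m}(\mathbb{R})$ and let $f\in C^\infty(\mathbb{R}^m)$ with $f(u)\neq 0$ for all $u$. Set $\mathbf{B}(u)=f(u)B$ and $\mathbf{D}(u)=f(u)D$, and let $L_{(\mathbf{B},\mathbf{D}^t)}\subset T\mathbb{R}^m\oplus T^*\mathbb{R}^m$ be the subbundle with fibre $L_{(\mathbf{B},\mathbf{D}^t)}(u)=\{(\mathbf{B}(u)z,\mathbf{D}^t(u)z): z\in\mathbb{R}^m\}$ at each $u\in\mathbb{R}^m$. Then $L_{(\mathbf{B},\mathbf{D}^t)}$ is a big-isotropic structure if and only if $DB+B^tD^t=0$, and it is a Dirac structure if and only if $DB+B^tD^t=0$ and $\ker B\cap\ker D^t=\{0\}$.
   Context: For a manifold $M$, $\mathbb{T}M=TM\oplus T^*M$ carries the pairing $\langle\langle (X,\alpha),(Y,\beta)\rangle\rangle=\frac12(\beta(X)+\alpha(Y))$. For a linear subbundle $L$, $L^\perp=\{(X,\alpha): \langle\langle (X,\alpha),(Y,\beta)\rangle\rangle=0\ \forall (Y,\beta)\in L\}$; $L$ is isotropic if $L\subseteq L^\perp$ and maximal isotropic if $L=L^\perp$. The Courant bracket of sections is $[(X,\alpha),(Y,\beta)]=\big([X,Y],\ \mathcal{L}_X\beta-\mathcal{L}_Y\alpha+\frac12 d(\alpha(Y)-\beta(X))\big)$. A big-isotropic structure is an isotropic linear subbundle whose space of sections is closed under the Courant bracket; a Dirac structure is a maximal isotropic linear subbundle whose sections are closed under the Courant bracket. Vectors and covectors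 on $\mathbb{R}^m$ are identified with column vectors in $\mathbb{R}^m$ via the canonical basis. *)

From HB Require Import structures.
From mathcomp Require Import all_boot all_order all_algebra.
From mathcomp Require Import all_classical all_reals all_analysis.
Set Implicit Arguments. Unset Strict Implicit. Unset Printing Implicit Defensive.
Import Order.TTheory GRing.Theory Num.Theory.
Import numFieldNormedType.Exports.
Local Open Scope ring_scope.
Local Open Scope classical_set_scope.

(* Points, vectors and covectors of R^m are column vectors 'cV[R]_m. *)

Fixpoint iterD {R : realType} {V W : normedModType R}
    (vs : seq V) (f : V -> W) : V -> W :=
  match vs with
  | [::] => f
  | v :: vs' => fun x => derive (iterD vs' f) x v
  end.

Definition smooth {R : realType} {V W : normedModType R} (f : V -> W) : Prop :=
  forall vs : seq V, continuous (iterD vs f) /\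
    forall (x v : V), derivable (iterD vs f) x v.

Section Courant.
Variables (R : realType) (m : nat).
Notation vec := 'cV[R]_m.

Definition evec (j : 'I_m) : vec := delta_mx j 0.

(* alpha(X) for a covector alpha and vector X *)
Definition dotv (a X : vec) : R := \sum_(i < m) a i 0 * X i 0.

Definition pairingT (p q : vec * vec) : R :=
  (dotv q.2 p.1 + dotv p.2 q.1) / 2%:R.

Definition lieb (X Y : vec -> vec) (u : vec) : vec :=
  derive Y u (X u) - derive X u (Y u).

Definition dfun (g : vec -> R) (u : vec) : vec :=
  \col_(j < m) derive g u (evec j).

Definition lieD (X b : vec -> vec) (u : vec) : vec :=
  derive b u (X u) + \col_(j < m) dotv (b u) (derive X u (evec j)).

Definition courant (X a Y b : vec -> vec) : (vec -> vec) * (vec -> vec) :=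
  (lieb X Y,
   fun u => lieD X b u - lieD Y a u
            + 2%:R^-1 *: dfun (fun w => dotv (a w) (Y w) - dotv (b w) (X w)) u).

Definition fibres := vec -> set (vec * vec).

Definition perp (S : set (vec * vec)) : set (vec * vec) :=
  [set p | forall q, S q -> pairingT p q = 0].

Definition section (L : fibres) (X a : vec -> vec) : Prop :=
  smooth X /\ smooth a /\ forall u, L u (X u, a u).

Definition courant_closed (L : fibres) : Prop :=
  forall X a Y b, section L X a -> section L Y b ->
    forall u, L u (((courant X a Y b).1 u), ((courant X a Y b).2 u)).

Definition big_isotropic_structure (L : fibres) : Prop :=
  (forall u, L u `<=` perp (L u)) /\ courant_closed L.

Definition dirac_structure (L : fibres) : Prop :=
  (forall u, L u = perp (L u)) /\ courant_closed L.

Definition LBD (f : vec -> R) (B D : 'M[R]_m) : fibres :=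
  fun u => [set p | exists z : vec,
    p = (f u *: (B *m z), f u *: (D^T *m z))].

End Courant.

(* Since f never vanishes, every fibre of L is the same subspace
   L0 = {(B z, D^T z)}.  Pairing with
   (B z, D^T z) shows that the annihilator of L0 is the kernel of
   (x, a) |-> D x + B^T a; hence L0 is isotropic iff D B + B^T D^T = 0.
   Encoding (x, a) as a row vector, L0 is the row space of [B^T D] and its
   annihilator is the left kernel of [D^T; B], a matrix of the same rank r, so
   the annihilator has dimension 2m - r and L0 is maximal isotropic iff
   moreover r = m, i.e. ker B and ker D^T meet only in 0.
   For closedness, a pseudo-inverse of [B^T D] writes every smooth section of
   L as (B z, D^T z) with z differentiable.  When (x, y) |-> <D^T x, B y> is
   skew, the Lie-derivative terms of the Courant bracket of the sections given
   by z and w cancel against half the differential of their pairing, and the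
   bracket is the section given by D_(B z) w - D_(B w) z. *)

From HB Require Import structures.
From mathcomp Require Import all_boot all_order all_algebra.
From mathcomp Require Import all_classical all_reals all_analysis.
From mathcomp Require Import zify ring.
Import Order.TTheory GRing.Theory Num.Theory.
Import numFieldNormedType.Exports.
Local Open Scope ring_scope.
Local Open Scope classical_set_scope.

Section derive_matrix.
Context {R : realFieldType} {V : normedModType R}.

Lemma derive_entry p q (F : V -> 'M[R]_(p, q)) t v i j :
  derivable F t v -> derive (fun x => F x i j) t v = derive F t v i j.
Proof. by move=> dF; rewrite derive_mx // mxE. Qed.

Lemma mulmx_entry_fun p q n (A : 'M[R]_(p, q)) (F : V -> 'M[R]_(q, n)) i j :
  (fun x => (A *m F x) i j) = \sum_(k < q) A i k \*: (fun x => F x k j).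
Proof. by apply/funext => x; rewrite mxE fct_sumE. Qed.

Lemma derivable_mulmx p q n (A : 'M[R]_(p, q)) (F : V -> 'M[R]_(q, n)) t v :
  derivable F t v -> derivable (fun x => A *m F x) t v.
Proof.
move=> dF; apply/derivable_mxP => i j; rewrite mulmx_entry_fun.
by apply: derivable_sum => k; apply: derivableZ; move/derivable_mxP: dF.
Qed.

Lemma derive_mulmx p q n (A : 'M[R]_(p, q)) (F : V -> 'M[R]_(q, n)) t v :
  derivable F t v -> derive (fun x => A *m F x) t v = A *m derive F t v.
Proof.
move=> dF; have dFij k j : derivable (fun x => F x k j) t v.
  by move/derivable_mxP: dF.
apply/matrixP => i j; rewrite -derive_entry; last exact: derivable_mulmx.
rewrite mulmx_entry_fun derive_sum => [|k]; last exact: derivableZ.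
by rewrite [RHS]mxE; apply: eq_bigr => k _; rewrite deriveZ // derive_entry.
Qed.

End derive_matrix.

Section dotv.
Context {R : realType} {m : nat}.
Implicit Types (a X Y : 'cV[R]_m) (A : 'M[R]_m).

Lemma dotvC a X : dotv a X = dotv X a.
Proof. by apply: eq_bigr => i _; rewrite mulrC. Qed.

Lemma dotvDr a X Y : dotv a (X + Y) = dotv a X + dotv a Y.
Proof. by rewrite /dotv -big_split; apply: eq_bigr => i _; rewrite mxE mulrDr. Qed.

Lemma dotv0 a : dotv a 0 = 0.
Proof. by rewrite /dotv big1 // => i _; rewrite mxE mulr0. Qed.

Lemma dotv_mulmxl A a X : dotv (A *m a) X = dotv a (A^T *m X).
Proof.
have dotvE b Y : dotv b Y = (b^T *m Y) 0 0.
  by rewrite mxE; apply: eq_bigr => i _; rewrite mxE.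
by rewrite !dotvE trmx_mul mulmxA.
Qed.

Lemma dotv_evec i X : dotv (evec R i) X = X i 0.
Proof.
rewrite /dotv (bigD1 i) //= big1 => [|j ji].
  by rewrite !mxE !eqxx mul1r addr0.
by rewrite !mxE (negbTE ji) mul0r.
Qed.

Lemma dotv_fun {V : normedModType R} (F G : V -> 'cV[R]_m) :
  (fun x => dotv (F x) (G x)) =
  \sum_(i < m) (fun x => F x i 0) * (fun x => G x i 0).
Proof. by apply/funext => x; rewrite fct_sumE. Qed.

Lemma derivable_dotv {V : normedModType R} (F G : V -> 'cV[R]_m) t v :
  derivable F t v -> derivable G t v -> derivable (fun x => dotv (F x) (G x)) t v.
Proof.
move=> /derivable_mxP dF /derivable_mxP dG; rewrite dotv_fun.
by apply: derivable_sum => i; apply: derivableM.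
Qed.

Lemma derive_dotv {V : normedModType R} (F G : V -> 'cV[R]_m) t v :
  derivable F t v -> derivable G t v ->
  derive (fun x => dotv (F x) (G x)) t v =
  dotv (derive F t v) (G t) + dotv (F t) (derive G t v).
Proof.
move=> dF dG.
have dFi i : derivable (fun x => F x i 0) t v by move/derivable_mxP: dF.
have dGi i : derivable (fun x => G x i 0) t v by move/derivable_mxP: dG.
rewrite dotv_fun derive_sum => [|i]; last exact: derivableM.
rewrite /dotv -big_split; apply: eq_bigr => i _ /=.
by rewrite deriveM // !derive_entry // addrC; congr (_ + _); exact: mulrC.
Qed.

Lemma dfunB (g h : 'cV[R]_m -> R) u :
  (forall v, derivable g u v) -> (forall v, derivable h u v) ->
  dfun (fun x => g x - h x) u = dfun g u - dfun h u.
Proof. by move=> dg dh; apply/matrixP => j k; rewrite !mxE deriveB. Qed.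

End dotv.

Lemma eqmx_kermx_row_free (F : fieldType) p q (A : 'M[F]_(p, p + p))
    (C : 'M[F]_(p + p, q)) :
  \rank C = \rank A -> (A == kermx C)%MS = (A *m C == 0) && row_free A.
Proof.
move=> rCA; rewrite -sub_kermx; have [sAK /=|//] := boolP (A <= kermx C)%MS.
rewrite -(mxrank_leqif_sup sAK).2 mxrank_ker rCA /row_free.
have := mxrankS sAK; rewrite mxrank_ker rCA => rAK.
by apply/eqP/eqP; lia.
Qed.

Section BD_image.
Context {R : realType} {m : nat} (B D : 'M[R]_m).

Definition BD_image : set ('cV[R]_m * 'cV[R]_m) :=
  range (fun z => (B *m z, D^T *m z)).

Lemma LBDE {f : 'cV[R]_m -> R} {u} : f u != 0 -> LBD f B D u = BD_image.
Proof.
move=> fu0; rewrite eqEsubset; split=> [_ [z ->] | _ [z _ <-]].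
  by exists (f u *: z) => //; rewrite !scalemxAr.
exists ((f u)^-1 *: z).
by rewrite -!scalemxAr !scalerA mulfV // !scale1r.
Qed.

Lemma pairingT_BD x al z :
  pairingT (x, al) (B *m z, D^T *m z) = dotv z (D *m x + B^T *m al) / 2%:R.
Proof.
by rewrite /pairingT /= dotv_mulmxl trmxK [dotv al _]dotvC dotv_mulmxl dotvDr.
Qed.

Lemma perp_BD_imageE x al : perp BD_image (x, al) <-> D *m x + B^T *m al = 0.
Proof.
split=> [h | h _ [z _ <-]]; last by rewrite pairingT_BD h dotv0 mul0r.
apply/colP => i.
have /eqP := h _ (ex_intro2 _ _ (evec R i) I erefl).
rewrite pairingT_BD dotv_evec mulf_eq0 invr_eq0 pnatr_eq0 orbF.
by move=> /eqP ->; rewrite mxE.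
Qed.

Lemma BD_image_isotropicE :
  BD_image `<=` perp BD_image <-> D *m B + B^T *m D^T = 0.
Proof.
split=> [iso | hC _ [z _ <-]]; last first.
  by apply/perp_BD_imageE; rewrite !mulmxA -mulmxDl hC mul0mx.
apply/matrixP => i j.
have /perp_BD_imageE := iso _ (ex_intro2 _ _ (evec R j) I erefl).
rewrite !mulmxA -mulmxDl /evec -colE => /colP /(_ i).
by rewrite !mxE.
Qed.

Lemma BD_image_submxE x al :
  BD_image (x, al) <-> (row_mx x^T al^T <= row_mx B^T D)%MS.
Proof.
split=> [[z _ [<- <-]] | /submxP [w]].
  by apply/submxP; exists z^T; rewrite mul_mx_row !trmx_mul trmxK.
rewrite mul_mx_row => /eq_row_mx [Ex Eal]; exists w^T => //.
by rewrite -[x]trmxK -[al]trmxK Ex Eal !trmx_mul !trmxK.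
Qed.

Lemma perp_BD_image_submxE x al :
  perp BD_image (x, al) <-> (row_mx x^T al^T <= kermx (col_mx D^T B))%MS.
Proof.
apply: (iff_trans (perp_BD_imageE x al)).
rewrite (sameP sub_kermxP eqP) mul_row_col.
have -> : x^T *m D^T + al^T *m B = (D *m x + B^T *m al)^T.
  by rewrite linearD /= !trmx_mul trmxK.
by rewrite trmx_eq0; exact: rwP eqP.
Qed.

Lemma BD_image_perp_eqE :
  BD_image = perp BD_image <-> (row_mx B^T D == kermx (col_mx D^T B))%MS.
Proof.
have rV_split (r : 'rV[R]_(m + m)) : r = row_mx (lsubmx r)^T^T (rsubmx r)^T^T.
  by rewrite !trmxK hsubmxK.
split=> [eqL | /eqmxP eqMK].
  apply/andP; split; apply/row_subP => i; rewrite [row i _]rV_split.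
    apply/perp_BD_image_submxE; rewrite -eqL.
    by apply/BD_image_submxE; rewrite -rV_split row_sub.
  apply/BD_image_submxE; rewrite eqL.
  by apply/perp_BD_image_submxE; rewrite -rV_split row_sub.
rewrite predeqE => -[x al].
by rewrite BD_image_submxE perp_BD_image_submxE eqMK.
Qed.

Lemma row_free_BDE :
  row_free (row_mx B^T D) <->
  forall z : 'cV_m, B *m z = 0 -> D^T *m z = 0 -> z = 0.
Proof.
split=> [free z Bz Dz | inj].
  apply: trmx_inj; apply/eqP; rewrite trmx0 -(mulmx_free_eq0 _ free) mul_mx_row.
  by rewrite -[D]trmxK -!trmx_mul Bz Dz !trmx0 row_mx0.
apply: inj_row_free => v; rewrite mul_mx_row => /eqP; rewrite row_mx_eq0.
case/andP => /eqP vB /eqP vD; apply: trmx_inj; rewrite trmx0; apply: inj.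
  by rewrite -[B]trmxK -trmx_mul vB trmx0.
by rewrite -trmx_mul vD trmx0.
Qed.

Lemma BD_image_lagrangianE :
  BD_image = perp BD_image <->
  D *m B + B^T *m D^T = 0 /\
  (forall z : 'cV_m, B *m z = 0 -> D^T *m z = 0 -> z = 0).
Proof.
apply: (iff_trans BD_image_perp_eqE).
have rank_tr : \rank (col_mx D^T B) = \rank (row_mx B^T D).
  by rewrite -[RHS]mxrank_tr tr_row_mx trmxK -!addsmxE addsmxC.
rewrite eqmx_kermx_row_free // mul_row_col addrC.
split=> [/andP[/eqP-> /row_free_BDE]| [-> /row_free_BDE ->]] //.
by rewrite eqxx.
Qed.

Lemma dotv_BD_skew x y : D *m B + B^T *m D^T = 0 ->
  dotv (D^T *m x) (B *m y) = - dotv (D^T *m y) (B *m x).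
Proof.
move=> hC; apply/eqP; rewrite -addr_eq0.
have := pairingT_BD (B *m y) (D^T *m y) x.
rewrite /pairingT /= !mulmxA -mulmxDl hC mul0mx dotv0 mul0r => /eqP.
by rewrite mulf_eq0 invr_eq0 pnatr_eq0 orbF.
Qed.

Lemma BD_image_param : exists P Q : 'M[R]_m, forall x al, BD_image (x, al) ->
  x = B *m (P *m x + Q *m al) /\ al = D^T *m (P *m x + Q *m al).
Proof.
exists (lsubmx (pinvmx (row_mx B^T D))^T), (rsubmx (pinvmx (row_mx B^T D))^T).
move=> x al /BD_image_submxE /mulmxKpV /(congr1 trmx); move: (pinvmx _) => P.
rewrite !trmx_mul !tr_row_mx !trmxK -{1}[P^T]hsubmxK mul_row_col mul_col_mx.
by case/eq_col_mx.
Qed.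

End BD_image.

Section courant_BD.
Context {R : realType} {m : nat}.
Implicit Types (z w : 'cV[R]_m -> 'cV[R]_m).

Lemma lieb_mulmx (A : 'M[R]_m) z w u :
  (forall v, derivable z u v) -> (forall v, derivable w u v) ->
  lieb (fun x => A *m z x) (fun x => A *m w x) u =
  A *m (derive w u (A *m z u) - derive z u (A *m w u)).
Proof. by move=> dz dw; rewrite /lieb !derive_mulmx // mulmxBr. Qed.

Lemma lieD_mulmx (A C : 'M[R]_m) z w u :
  (forall v, derivable z u v) -> (forall v, derivable w u v) ->
  lieD (fun x => A *m z x) (fun x => C *m w x) u =
  C *m derive w u (A *m z u) + \col_j dotv (C *m w u) (A *m derive z u (evec R j)).
Proof.
move=> dz dw; rewrite /lieD derive_mulmx //; congr (_ + _).
by apply/matrixP => i j; rewrite !mxE derive_mulmx.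
Qed.

Context {B D : 'M[R]_m} (skewBD : D *m B + B^T *m D^T = 0).

Lemma courant2_BD z w u :
  (forall v, derivable z u v) -> (forall v, derivable w u v) ->
  (courant (fun x => B *m z x) (fun x => D^T *m z x)
           (fun x => B *m w x) (fun x => D^T *m w x)).2 u =
  D^T *m (derive w u (B *m z u) - derive z u (B *m w u)).
Proof.
move=> dz dw; rewrite /= !lieD_mulmx //.
have dBz v : derivable (fun x => B *m z x) u v by exact: derivable_mulmx.
have dBw v : derivable (fun x => B *m w x) u v by exact: derivable_mulmx.
have dDz v : derivable (fun x => D^T *m z x) u v by exact: derivable_mulmx.
have dDw v : derivable (fun x => D^T *m w x) u v by exact: derivable_mulmx.
rewrite dfunB => [|v|v]; [|exact: derivable_dotv..].
rewrite mulmxBr; apply/matrixP => i k.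
rewrite !mxE !derive_dotv // !derive_mulmx //.
rewrite (dotv_BD_skew _ _ (derive z u (evec R i)) (w u) skewBD).
rewrite (dotv_BD_skew _ _ (derive w u (evec R i)) (z u) skewBD).
by field.
Qed.

Lemma LBD_section_factor {f : 'cV[R]_m -> R} : (forall u, f u != 0) ->
  forall X a, section (LBD f B D) X a ->
  exists z, (forall x v, derivable z x v) /\
    X = (fun x => B *m z x) /\ a = (fun x => D^T *m z x).
Proof.
move=> hf0 X a [sX [sa LXa]]; have [P [Q param]] := BD_image_param B D.
exists (fun x => P *m X x + Q *m a x); split.
  move=> x v; apply: derivableD; apply: derivable_mulmx.
    exact: (sX [::]).2.
  exact: (sa [::]).2.
by split; apply/funext => x; have := LXa x; rewrite LBDE // => /param [].
Qed.

Lemma LBD_courant_closed {f : 'cV[R]_m -> R} :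
  (forall u, f u != 0) -> courant_closed (LBD f B D).
Proof.
move=> hf0 X a Y b /(LBD_section_factor hf0) [z [dz [-> ->]]].
move=> /(LBD_section_factor hf0) [w [dw [-> ->]]] u.
rewrite LBDE //; exists (derive w u (B *m z u) - derive z u (B *m w u)) => //.
by rewrite courant2_BD // /= lieb_mulmx.
Qed.

End courant_BD.

Theorem lemma4p4 (R : realType) (m : nat) (B D : 'M[R]_m)
    (f : 'cV[R]_m -> R) (hf : smooth f) (hf0 : forall u, f u != 0) :
  (big_isotropic_structure (LBD f B D) <-> D *m B + B^T *m D^T = 0) /\
  (dirac_structure (LBD f B D) <->
     D *m B + B^T *m D^T = 0 /\
     (forall z : 'cV[R]_m, B *m z = 0 -> D^T *m z = 0 -> z = 0)).
Proof.
have LE u : LBD f B D u = BD_image B D := LBDE B D (hf0 u).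
have closed hC : courant_closed (LBD f B D) := LBD_courant_closed hC hf0.
split; split.
- by case=> /(_ 0); rewrite LE => /BD_image_isotropicE.
- move=> hC; split; last exact: closed.
  by move=> u; rewrite LE; apply/BD_image_isotropicE.
- by case=> /(_ 0); rewrite LE => /BD_image_lagrangianE.
- move=> lagr; split; last exact: closed lagr.1.
  by move=> u; rewrite LE; apply/BD_image_lagrangianE.
Qed.
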